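(* Let $\mathcal{H}$ be a separable complex Hilbert space, let $T \in B(\mathcal{H})$, and write $T = A + iB$ with $A = A^*$ and $B = B^*$. If $\operatorname{rank}(A) = 1$ or $\operatorname{rank}(B) = 1$, then $T$ is a complex symmetric operator.
   Context: A conjugation on $\mathcal{H}$ is a conjugate-linear map $C:\mathcal{H}\to\mathcal{H}$ that is isometric and involutive ($C^2=I$). An operator $T$ is complex symmetric if $T = CT^*C$ for some conjugation $C$. *)

From HB Require Import structures.
From mathcomp Require Import all_boot all_order all_algebra.
From mathcomp Require Import reals.
From mathcomp Require Import complex.
Set Implicit Arguments. Unset Strict Implicit. Unset Printing Implicit Defensive.
Import Order.TTheory GRing.Theory Num.Theory.
Local Open Scope ring_scope.

Section Hilbert.
Variable R : realType.
Local Notation C := R[i].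
Variable V : lmodType C.
Variable ip : V -> V -> C.

Definition inner_product : Prop :=
  [/\ forall (a : C) (x y z : V), ip (a *: x + y) z = a * ip x z + ip y z,
      forall x y : V, ip y x = (ip x y)^*,
      forall x : V, 0 <= ip x x
    & forall x : V, ip x x = 0 -> x = 0].

(* the induced norm ||x|| = sqrt <x, x> (a nonnegative real in C) *)
Definition hnorm (x : V) : C := sqrtC (ip x x).

Definition cauchy_seq (u : nat -> V) : Prop :=
  forall e : C, 0 < e -> exists N : nat, forall m n : nat,
    (N <= m)%N -> (N <= n)%N -> hnorm (u m - u n) < e.

Definition converges_to (u : nat -> V) (l : V) : Prop :=
  forall e : C, 0 < e -> exists N : nat, forall n : nat,
    (N <= n)%N -> hnorm (u n - l) < e.

Definition complete : Prop :=
  forall u : nat -> V, cauchy_seq u -> exists l : V, converges_to u l.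

Definition separable : Prop :=
  exists d : nat -> V, forall (x : V) (e : C), 0 < e ->
    exists n : nat, hnorm (x - d n) < e.

Definition separable_hilbert : Prop :=
  [/\ inner_product, complete & separable].

Definition is_linear (T : V -> V) : Prop :=
  forall (a : C) (x y : V), T (a *: x + y) = a *: T x + T y.

Definition bounded_op (T : V -> V) : Prop :=
  is_linear T /\ exists M : C, forall x : V, hnorm (T x) <= M * hnorm x.

Definition is_adjoint (T S : V -> V) : Prop :=
  forall x y : V, ip (T x) y = ip x (S y).

Definition self_adjoint (A : V -> V) : Prop := is_adjoint A A.

(* rank A = dim (range A); rank A = 1 means the range of A is a
   one-dimensional subspace: spanned by a single nonzero vector *)
Definition rank_one (A : V -> V) : Prop :=
  exists u : V, u != 0 /\
    (forall x : V, exists c : C, A x = c *: u) /\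
    (exists x : V, A x = u).

Definition conjugation (J : V -> V) : Prop :=
  [/\ forall x y : V, J (x + y) = J x + J y,
      forall (a : C) (x : V), J (a *: x) = a^* *: J x,
      forall x : V, hnorm (J x) = hnorm x
    & forall x : V, J (J x) = x].

Definition complex_symmetric (T : V -> V) : Prop :=
  exists J : V -> V, conjugation J /\
    exists S : V -> V, is_adjoint T S /\ forall x : V, T x = J (S (J x)).

End Hilbert.

From HB Require Import structures.
From mathcomp Require Import all_boot all_order all_algebra.
From mathcomp Require Import boolp classical_sets.
From mathcomp Require Import reals.
From mathcomp Require Import ring lra.
From mathcomp Require Import complex.
Import Order.TTheory GRing.Theory Num.Theory.
Local Open Scope classical_set_scope.
Local Open Scope complex_scope.
Local Open Scope ring_scope.
Set Implicit Arguments. Unset Strict Implicit. Unset Printing Implicit Defensive.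

(* Say A has rank one, A x = c(x) u.  It suffices to find an antiunitary involution J
   commuting with B and fixing u: as A is self-adjoint, c(x) = r <x, u> with r real, so
   J A J = A, and then J T^* J = J (A - iB) J = A + iB = T.
   Such a J exists for every bounded self-adjoint B and every vector u.  By Zorn's lemma
   take a maximal real subspace W containing u, invariant under B, on which the inner
   product is real-valued.  Maximality makes W closed and kills every vector orthogonal to W
   (otherwise one could add its real B-cyclic subspace).  As W and iW are orthogonal for the
   real part of the inner product, W + iW is closed, hence the whole space by the projection
   theorem, and J (a + ib) = a - ib is the required involution. *)

Section ComplexFacts.
Variable R : realType.

Lemma conjC_realC (r : R) : (r%:C)^* = r%:C.
Proof. exact: conjc_real. Qed.

Lemma conjCi : ('i%C : R[i])^* = - 'i%C.
Proof. by apply/eqP; rewrite eq_complex /= oppr0 !eqxx. Qed.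

Lemma Re_conjC (z : R[i]) : complex.Re z^* = complex.Re z.
Proof. by case: z. Qed.

Lemma Im_conjC (z : R[i]) : complex.Im z^* = - complex.Im z.
Proof. by case: z. Qed.

Lemma conjC_complexE (z : R[i]) : z^* = (complex.Re z)%:C - 'i%C * (complex.Im z)%:C.
Proof. by rewrite {1}[z]complexE rmorphD rmorphM /= conjCi !conjC_realC mulNr. Qed.

Lemma conjC_fixed_Im (z : R[i]) : (z^* = z) <-> complex.Im z = 0.
Proof.
case: z => a b; split => [/(congr1 (@complex.Im R)) /= h | /= ->]; first lra.
by apply/eqP; rewrite eq_complex /= oppr0 !eqxx.
Qed.

Lemma Re_realCM (r : R) (z : R[i]) : complex.Re (r%:C * z) = r * complex.Re z.
Proof. by case: z => a b /=; ring. Qed.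

Lemma gt0_complexE (e : R[i]) : 0 < e -> e = (complex.Re e)%:C /\ 0 < complex.Re e.
Proof. by case: e => a b; rewrite ltcE /= => /andP[/eqP -> ->]. Qed.

End ComplexFacts.

Section InnerProduct.
Variable R : realType.
Variable V : lmodType R[i].
Variable ip : V -> V -> R[i].
Hypothesis Hip : inner_product ip.

Lemma ipZDl a x y z : ip (a *: x + y) z = a * ip x z + ip y z.
Proof. by case: Hip. Qed.

Lemma ipC x y : ip y x = (ip x y)^*.
Proof. by case: Hip. Qed.

Lemma ipDl x y z : ip (x + y) z = ip x z + ip y z.
Proof. by rewrite -{1}[x]scale1r ipZDl mul1r. Qed.

Lemma ip0l z : ip 0 z = 0.
Proof. by have := ipDl 0 0 z; rewrite addr0 -{1}[ip 0 z]addr0 => /addrI. Qed.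

Lemma ipZl a x z : ip (a *: x) z = a * ip x z.
Proof. by rewrite -[a *: x]addr0 ipZDl ip0l addr0. Qed.

Lemma ipBl x y z : ip (x - y) z = ip x z - ip y z.
Proof. by rewrite ipDl -scaleN1r ipZl mulN1r. Qed.

Lemma ip0r z : ip z 0 = 0.
Proof. by rewrite ipC ip0l rmorph0. Qed.

Lemma ipDr x y z : ip z (x + y) = ip z x + ip z y.
Proof. by rewrite ipC ipDl rmorphD /= -!ipC. Qed.

Lemma ipZr a x z : ip z (a *: x) = a^* * ip z x.
Proof. by rewrite ipC ipZl rmorphM /= -!ipC. Qed.

Lemma ipBr x y z : ip z (x - y) = ip z x - ip z y.
Proof. by rewrite ipC ipBl rmorphB /= -!ipC. Qed.

Definition sqn (x : V) : R := complex.Re (ip x x).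

Lemma ipxx x : ip x x = (sqn x)%:C.
Proof.
case: Hip => _ _ /(_ x) + _; rewrite /sqn.
by case: (ip x x) => a b; rewrite lecE /= => /andP[/eqP ->].
Qed.

Lemma sqn_ge0 x : 0 <= sqn x.
Proof. by case: Hip => _ _ /(_ x) + _; rewrite ipxx lecR. Qed.

Lemma sqn_eq0 x : sqn x = 0 -> x = 0.
Proof. by move=> x0; case: Hip => _ _ _; apply; rewrite ipxx x0. Qed.

Lemma sqn0 : sqn 0 = 0.
Proof. by rewrite /sqn ip0l. Qed.

Lemma sqnD x y : sqn (x + y) = sqn x + sqn y + 2 * complex.Re (ip x y).
Proof. by rewrite /sqn ipDl !ipDr [ip y x]ipC !raddfD /= Re_conjC; ring. Qed.

Lemma sqnZ a x : sqn (a *: x) = (complex.Re a ^+ 2 + complex.Im a ^+ 2) * sqn x.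
Proof. by rewrite /sqn ipZl ipZr ipxx; case: a => a b /=; ring. Qed.

Lemma sqnN x : sqn (- x) = sqn x.
Proof. by rewrite -scaleN1r sqnZ /=; ring. Qed.

Lemma sqnB x y : sqn (x - y) = sqn x + sqn y - 2 * complex.Re (ip x y).
Proof. by rewrite sqnD sqnN -[- y]sub0r ipBr ip0r sub0r raddfN /=; ring. Qed.

Lemma sqnZr (r : R) x : sqn (r%:C *: x) = r ^+ 2 * sqn x.
Proof. by rewrite sqnZ /=; congr (_ * _); ring. Qed.

Lemma parallelogram x y : sqn (x + y) + sqn (x - y) = 2 * sqn x + 2 * sqn y.
Proof. by rewrite sqnD sqnB; ring. Qed.

Lemma cauchy_schwarz x y :
  complex.Re (ip x y) ^+ 2 + complex.Im (ip x y) ^+ 2 <= sqn x * sqn y.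
Proof.
have [/sqn_eq0 -> | y_neq0] := eqVneq (sqn y) 0.
  by rewrite ip0r sqn0 mulr0 /= expr0n /= addr0.
have y_gt0 : 0 < sqn y by rewrite lt_neqAle eq_sym y_neq0 sqn_ge0.
case E: (ip x y) => [p q] /=.
(* expand [0 <= sqn (x - t y)] at the minimizing [t = <x, y> / sqn y] *)
have := sqn_ge0 (x - ((p / sqn y) +i* (q / sqn y)) *: y).
rewrite sqnB sqnZ ipZr E /=.
have -> : ((p / sqn y) ^+ 2 + (q / sqn y) ^+ 2) * sqn y = (p ^+ 2 + q ^+ 2) / sqn y.
  by field.
have -> : p / sqn y * p - - (q / sqn y) * q = (p ^+ 2 + q ^+ 2) / sqn y.
  by field.
by rewrite -ler_pdivrMr //; lra.
Qed.

Lemma sqnD_le x y : sqn (x + y) <= 2 * sqn x + 2 * sqn y.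
Proof. by have := parallelogram x y; have := sqn_ge0 (x - y); lra. Qed.

End InnerProduct.

Section Convergence.
Variable R : realType.
Variable V : lmodType R[i].
Variable ip : V -> V -> R[i].
Hypothesis Hip : inner_product ip.
Local Notation sqn := (sqn ip).

(* Convergence is measured by the squared norm with real tolerances;
   [cauchy_converges] connects it with [complete]. *)
Definition converges (u : nat -> V) (l : V) : Prop :=
  forall e : R, 0 < e -> exists N, forall n, (N <= n)%N -> sqn (u n - l) < e.

Definition cauchy (u : nat -> V) : Prop :=
  forall e : R, 0 < e -> exists N, forall m n, (N <= m)%N -> (N <= n)%N ->
    sqn (u m - u n) < e.

Lemma sqn_subC x y : sqn (x - y) = sqn (y - x).
Proof. by rewrite -opprB (sqnN Hip). Qed.

Lemma sqn_sub_le x y z : sqn (x - z) <= 2 * sqn (x - y) + 2 * sqn (y - z).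
Proof. by rewrite -(subrKA y) (sqnD_le Hip). Qed.

Lemma sqn_eq0_le x : (forall e : R, 0 < e -> sqn x < e) -> x = 0.
Proof.
move=> small; apply: (sqn_eq0 Hip); apply/eqP; rewrite eq_le (sqn_ge0 Hip x) andbT.
by apply/ler_addgt0Pr => e /small /ltW; rewrite add0r.
Qed.

Lemma converges_cauchy u l : converges u l -> cauchy u.
Proof.
move=> ul e e_gt0; have [N ulN] := ul (e / 4) ltac:(lra).
exists N => m n /ulN um /ulN un.
by have := sqn_sub_le (u m) l (u n); rewrite (sqn_subC l); lra.
Qed.

Lemma converges_unique u l l' : converges u l -> converges u l' -> l = l'.
Proof.
move=> ul ul'; apply/subr0_eq/sqn_eq0_le => e e_gt0.
have [N1 ulN1] := ul (e / 4) ltac:(lra).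
have [N2 ulN2] := ul' (e / 4) ltac:(lra).
have := sqn_sub_le l (u (maxn N1 N2)) l'; rewrite (sqn_subC l (u _)).
by have := ulN1 _ (leq_maxl N1 N2); have := ulN2 _ (leq_maxr N1 N2); lra.
Qed.

Lemma converges_cst l : converges (fun=> l) l.
Proof. by move=> e e_gt0; exists 0%N => n _; rewrite subrr (sqn0 Hip). Qed.

Lemma convergesD u v l m :
  converges u l -> converges v m -> converges (fun n => u n + v n) (l + m).
Proof.
move=> ul vm e e_gt0; have [N1 ulN1] := ul (e / 4) ltac:(lra).
have [N2 vmN2] := vm (e / 4) ltac:(lra).
exists (maxn N1 N2) => n; rewrite geq_max => /andP[/ulN1 un /vmN2 vn].
have := sqnD_le Hip (u n - l) (v n - m); rewrite addrACA -opprD; lra.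
Qed.

Lemma converges_lipschitz (F : V -> V) (K : R) u l :
  (forall x y, F (x - y) = F x - F y) -> (forall x, sqn (F x) <= K * sqn x) ->
  converges u l -> converges (F \o u) (F l).
Proof.
move=> FB FK ul e e_gt0.
have K1_gt0 : 0 < `|K| + 1 by have := normr_ge0 K; lra.
have [N ulN] := ul (e / (`|K| + 1)) (divr_gt0 e_gt0 K1_gt0).
exists N => n /ulN; rewrite ltr_pdivlMr //= -FB => un.
have := FK (u n - l); have := sqn_ge0 Hip (u n - l); have := ler_norm K; nra.
Qed.

Lemma convergesZ a u l : converges u l -> converges (fun n => a *: u n) (a *: l).
Proof.
apply: (converges_lipschitz (K := complex.Re a ^+ 2 + complex.Im a ^+ 2)).
  by move=> x y; rewrite scalerBr.
by move=> x; rewrite (sqnZ Hip).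
Qed.

Lemma converges_Im_ip0 u l z :
  converges u l -> (forall n, complex.Im (ip (u n) z) = 0) -> complex.Im (ip l z) = 0.
Proof.
move=> ul Im0; apply/eqP; rewrite -sqrf_eq0 eq_le sqr_ge0 andbT.
apply/ler_addgt0Pr => e e_gt0; rewrite add0r.
have z1_gt0 : 0 < sqn z + 1 by have := sqn_ge0 Hip z; lra.
have [N ulN] := ul (e / (sqn z + 1)) (divr_gt0 e_gt0 z1_gt0).
have := ulN N (leqnn N); rewrite ltr_pdivlMr //.
have := cauchy_schwarz Hip (u N - l) z.
rewrite (ipBl Hip) !raddfB /= Im0 sub0r sqrrN.
have := sqr_ge0 (complex.Re (ip (u N) z - ip l z)).
have := sqn_ge0 Hip z; have := sqn_ge0 Hip (u N - l); nra.
Qed.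

(* Lower semicontinuity of [sqn (x - _)], in the form needed for minimizing sequences. *)
Lemma sqn_le_converges x u p (d : R) : converges u p ->
  (forall eta, 0 < eta -> exists N, forall n, (N <= n)%N -> sqn (x - u n) <= d + eta) ->
  sqn (x - p) <= d.
Proof.
move=> up near_d; rewrite leNgt; apply/negP => d_lt.
pose t := (sqn (x - p) - d) / 4; have t_gt0 : 0 < t by rewrite /t; lra.
have [N1 xuN1] := near_d t t_gt0.
have dt_ge0 : 0 <= d + t.
  by have := xuN1 N1 (leqnn _); have := sqn_ge0 Hip (x - u N1); lra.
have den_gt0 : 0 < d + 2 * t + 2 by lra.
have [N2 upN2] := up _ (divr_gt0 (exprn_gt0 2 t_gt0) den_gt0).
pose n := maxn N1 N2.
have xun := xuN1 n (leq_maxl _ _); have := upN2 n (leq_maxr _ _).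
rewrite ltr_pdivlMr //.
set a := sqn (x - u n); set b := sqn (u n - p) => b_small.
have a_ge0 : 0 <= a := sqn_ge0 Hip _; have b_ge0 : 0 <= b := sqn_ge0 Hip _.
have b_lt : b < t by nra.
have ab_le : a * b <= t ^+ 2 by nra.
have := cauchy_schwarz Hip (x - u n) (u n - p); rewrite -/a -/b.
have := sqr_ge0 (complex.Im (ip (x - u n) (u n - p))).
set r := complex.Re _ => Im2_ge0 rb.
have r_le : r <= t by apply: contra_leT (rb) => t_lt; nra.
have := sqnD Hip (x - u n) (u n - p); rewrite subrKA -/a -/b -/r.
by rewrite /t in xun r_le b_lt *; lra.
Qed.

Lemma hnormE x : hnorm ip x = (Num.sqrt (sqn x))%:C.
Proof.
rewrite /hnorm (ipxx Hip) -[in LHS](sqr_sqrtr (sqn_ge0 Hip x)) rmorphXn /=.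
by rewrite sqrCK // ler0c sqrtr_ge0.
Qed.

Lemma hnorm_ltR x (r : R) : 0 < r -> (hnorm ip x < r%:C) = (sqn x < r ^+ 2).
Proof.
move=> r_gt0; rewrite hnormE ltcR -[in RHS]ltr_sqrt ?exprn_gt0 //.
by rewrite sqrtr_sqr gtr0_norm.
Qed.

Lemma cauchy_converges : complete ip -> forall u, cauchy u -> exists l, converges u l.
Proof.
move=> Hcomplete u uC.
have [l ul] : exists l, converges_to ip u l.
  apply: Hcomplete => e /gt0_complexE[-> e_gt0].
  have [N uCN] := uC _ (exprn_gt0 2 e_gt0).
  by exists N => m n mN nN; rewrite hnorm_ltR //; apply: uCN.
exists l => e e_gt0.
have [N ulN] := ul (Num.sqrt e)%:C ltac:(by rewrite ltcR sqrtr_gt0).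
exists N => n /ulN; rewrite hnorm_ltR ?sqrtr_gt0 // sqr_sqrtr //; exact: ltW.
Qed.

End Convergence.

Lemma exists_inv_succ_lt (R : archiRealFieldType) (e : R) : 0 < e -> exists N : nat, N.+1%:R^-1 < e.
Proof.
move=> e_gt0; exists (Num.bound e^-1).
have /archi_boundP bound_gt : 0 <= e^-1 by rewrite invr_ge0 ltW.
rewrite invf_plt ?posrE ?ltr0n //; apply: lt_le_trans bound_gt _.
by rewrite ler_nat.
Qed.

Lemma inv_succ_le (R : numFieldType) (m n : nat) : (m <= n)%N -> n.+1%:R^-1 <= m.+1%:R^-1 :> R.
Proof. by move=> mn; rewrite lef_pV2 ?posrE ?ltr0n // ler_nat. Qed.

Section Projection.
Variable R : realType.
Variable V : lmodType R[i].
Variable ip : V -> V -> R[i].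
Hypothesis Hip : inner_product ip.
Local Notation sqn := (sqn ip).
Local Notation converges := (converges ip).

Definition real_subspace (M : set V) : Prop :=
  [/\ M 0, forall a b, M a -> M b -> M (a + b) & forall (r : R) a, M a -> M (r%:C *: a)].

Definition seq_closed (M : set V) : Prop :=
  forall u l, (forall n, M (u n)) -> converges u l -> M l.

Lemma real_subspaceN (W : set V) a : real_subspace W -> W a -> W (- a).
Proof. by case=> _ _ WZ /(WZ (-1)); rewrite rmorphN1 scaleN1r. Qed.

Lemma real_subspaceB (W : set V) a b : real_subspace W -> W a -> W b -> W (a - b).
Proof. by move=> W_sub Wa /(real_subspaceN W_sub); case: W_sub => _ WD _; apply: WD. Qed.

Variable M : set V.
Hypothesis M_sub : real_subspace M.

Lemma min_dist_orthogonal x p : M p -> (forall m, M m -> sqn (x - p) <= sqn (x - m)) ->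
  forall m, M m -> complex.Re (ip (x - p) m) = 0.
Proof.
case: M_sub => _ MD MZ Mp p_min m Mm.
set c := complex.Re (ip (x - p) m).
have m1_gt0 : 0 < sqn m + 1 by have := sqn_ge0 Hip m; lra.
(* compare with the competitor [p + t m] for [t = c / (sqn m + 1)] *)
pose t := c / (sqn m + 1).
have := p_min _ (MD _ _ Mp (MZ t _ Mm)).
rewrite opprD addrA (sqnB Hip (x - p)) (sqnZr Hip) (ipZr Hip) conjC_realC Re_realCM -/c.
have -> : c = t * (sqn m + 1) by rewrite /t mulfVK ?gt_eqF.
have := sqn_ge0 Hip m => m_ge0 le_t.
have t0 : t ^+ 2 * (sqn m + 2) <= 0 by nra.
suff -> : t = 0 by rewrite mul0r.
by apply/eqP; rewrite -sqrf_eq0 eq_le sqr_ge0 andbT -(pmulr_lle0 _ (_ : 0 < sqn m + 2)) //; lra.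
Qed.

Lemma minimizing_cauchy x (d : R) (f : nat -> V) : (forall m, M m -> d <= sqn (x - m)) ->
  (forall n, M (f n)) -> (forall n, sqn (x - f n) < d + n.+1%:R^-1) -> cauchy ip f.
Proof.
case: M_sub => _ MD MZ d_lb Mf f_min.
have f_close m n : sqn (f m - f n) <= 2 * m.+1%:R^-1 + 2 * n.+1%:R^-1.
  have mid : (x - f m) + (x - f n) = 2%:C *: (x - (2^-1)%:C *: (f m + f n)).
    rewrite scalerBr scalerA -rmorphM /= divff ?pnatr_eq0 // scale1r.
    by rewrite rmorph_nat scaler_nat mulr2n opprD addrACA.
  have := parallelogram Hip (x - f m) (x - f n).
  have -> : x - f m - (x - f n) = f n - f m by rewrite opprB addrC subrKA.
  rewrite mid (sqnZr Hip) (sqn_subC Hip (f n)).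
  have := d_lb _ (MZ 2^-1 _ (MD _ _ (Mf m) (Mf n))).
  have := f_min m; have := f_min n; rewrite expr2.
  (* [lra] needs the inverses of nat casts generalized to atoms *)
  by move: m.+1%:R^-1 n.+1%:R^-1 => im in_; lra.
move=> e e_gt0; have [N N_small] : exists N : nat, N.+1%:R^-1 < e / 4.
  by apply: exists_inv_succ_lt; lra.
exists N => m n /(inv_succ_le R) mN /(inv_succ_le R) nN.
apply: le_lt_trans (f_close m n) _.
by move: N.+1%:R^-1 m.+1%:R^-1 n.+1%:R^-1 N_small mN nN => iN im in_; lra.
Qed.

Hypothesis M_closed : seq_closed M.
Hypothesis Hcomplete : complete ip.

Theorem projection x : exists2 p, M p & forall m, M m -> complex.Re (ip (x - p) m) = 0.
Proof.
case: (M_sub) => M0 _ _.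
pose S : set R := fun r => exists2 m, M m & sqn (x - m) = r.
have S_inf : has_inf S.
  split; first by exists (sqn (x - 0)); exists 0.
  by exists 0 => _ [m _ <-]; apply: sqn_ge0.
have d_lb m : M m -> inf S <= sqn (x - m) by move=> Mm; apply: (ge_inf S_inf.2); exists m.
have near_inf n : exists m, M m /\ sqn (x - m) < inf S + n.+1%:R^-1.
  have inv_gt0 : 0 < n.+1%:R^-1 :> R by rewrite invr_gt0.
  by have [_ [m Mm <-]] := inf_adherent inv_gt0 S_inf; exists m.
have [f Hf] := choice near_inf.
have [p fp] := cauchy_converges Hip Hcomplete
  (minimizing_cauchy d_lb (fun n => (Hf n).1) (fun n => (Hf n).2)).
have Mp : M p by apply: (M_closed (fun n => (Hf n).1)).
exists p => //; apply: min_dist_orthogonal => // m Mm; apply: le_trans (d_lb _ Mm).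
apply: (sqn_le_converges Hip fp) => eta eta_gt0.
have [N N_small] := exists_inv_succ_lt eta_gt0.
exists N => n /(inv_succ_le R) nN; have := (Hf n).2.
by move: N.+1%:R^-1 n.+1%:R^-1 N_small nN => iN in_; lra.
Qed.

End Projection.

Section LinearMaps.
Variable R : realType.
Variable V : lmodType R[i].
Variable F : V -> V.
Hypothesis Flin : is_linear F.

Lemma is_linearD x y : F (x + y) = F x + F y.
Proof. by rewrite -{1}[x]scale1r Flin scale1r. Qed.

Lemma is_linear0 : F 0 = 0.
Proof. by apply: (@addIr _ (F 0)); rewrite -is_linearD !add0r. Qed.

Lemma is_linearZ a x : F (a *: x) = a *: F x.
Proof. by rewrite -[a *: x]addr0 Flin is_linear0 addr0. Qed.

Lemma is_linearB x y : F (x - y) = F x - F y.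
Proof. by rewrite is_linearD -scaleN1r is_linearZ scaleN1r. Qed.

End LinearMaps.

Lemma bounded_op_sqn (R : realType) (V : lmodType R[i]) (ip : V -> V -> R[i]) (F : V -> V) :
  inner_product ip -> bounded_op ip F -> exists K : R, forall x, sqn ip (F x) <= K * sqn ip x.
Proof.
move=> Hip [_ [M FM]]; exists (complex.Re M ^+ 2) => x.
have := FM x; rewrite !(hnormE Hip) lecE => /andP[_].
rewrite mulrC Re_realCM /= => le_norm.
have F_ge0 := sqn_ge0 Hip (F x); have x_ge0 := sqn_ge0 Hip x.
have norm_ge0 := le_trans (sqrtr_ge0 _) le_norm.
rewrite -(sqr_sqrtr F_ge0) -(sqr_sqrtr x_ge0) mulrC -exprMn.
by rewrite ler_sqr ?nnegrE ?sqrtr_ge0.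
Qed.

Section AdmissibleSubspaces.
Variable R : realType.
Variable V : lmodType R[i].
Variable ip : V -> V -> R[i].
Hypothesis Hip : inner_product ip.
Variable B : V -> V.
Hypothesis Blin : is_linear B.
Hypothesis Bsa : self_adjoint ip B.

Definition invariant (W : set V) : Prop := forall a, W a -> W (B a).

(* [ip a b = ip b a] says that [ip a b] is real. *)
Definition ip_real (W : set V) : Prop := forall a b, W a -> W b -> ip a b = ip b a.

Definition cyclic (v : V) : set V :=
  fun z => forall W : set V, real_subspace W -> invariant W -> W v -> W z.

Definition admissible (u : V) (W : set V) : Prop :=
  [/\ W u, real_subspace W, invariant W & ip_real W].

Lemma ip_iter_self_adjoint k x y : ip (iter k B x) y = ip x (iter k B y).
Proof. by elim: k x y => [//|k IH] x y; rewrite [LHS]/= Bsa IH -iterSr. Qed.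

Lemma cyclic_self v : cyclic v v.
Proof. by []. Qed.

Lemma cyclic_real_subspace v : real_subspace (cyclic v).
Proof.
split=> [W [W0 _ _] _ _ //|a b ca cb W W_sub WB Wv|r a ca W W_sub WB Wv].
  by case: (W_sub) => _ WD _; apply: WD; [apply: ca W_sub WB Wv | apply: cb W_sub WB Wv].
by case: (W_sub) => _ _ WZ; apply/WZ/(ca W W_sub WB Wv).
Qed.

Lemma cyclic_invariant v : invariant (cyclic v).
Proof. by move=> a ca W W_sub WB Wv; apply/WB/(ca W W_sub WB Wv). Qed.

(* [ip (B^j v) (B^k v) = ip v (B^(j+k) v)], and [ip v (B^n v)] is real. *)
Lemma cyclic_ip_real v : ip_real (cyclic v).
Proof.
pose S1 : set V := fun z => forall k, ip z (iter k B v) = ip (iter k B v) z.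
have S1_sub : real_subspace S1.
  split=> [k | a b Sa Sb k | r a Sa k]; first by rewrite (ip0l Hip) (ip0r Hip).
    by rewrite (ipDl Hip) (ipDr Hip) Sa Sb.
  by rewrite (ipZl Hip) (ipZr Hip) conjC_realC Sa.
have S1B : invariant S1.
  by move=> a Sa k; rewrite Bsa -(iterS k B) Sa iterS Bsa.
have S1v : S1 v by move=> k; rewrite ip_iter_self_adjoint.
pose S2 : set V := fun y => forall w, cyclic v w -> ip w y = ip y w.
have S2_sub : real_subspace S2.
  split=> [w _ | a b Sa Sb w cw | r a Sa w cw]; first by rewrite (ip0l Hip) (ip0r Hip).
    by rewrite (ipDl Hip) (ipDr Hip) Sa // Sb.
  by rewrite (ipZl Hip) (ipZr Hip) conjC_realC Sa.
have S2B : invariant S2.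
  by move=> a Sa w cw; rewrite -Bsa Sa ?Bsa //; apply: cyclic_invariant.
have S2v : S2 v by move=> w /(_ S1 S1_sub S1B S1v 0%N).
by move=> a b ca cb; apply: (cb S2 S2_sub S2B S2v).
Qed.

Lemma admissible_cyclic u : admissible u (cyclic u).
Proof.
split; [exact: cyclic_self | exact: cyclic_real_subspace |
  exact: cyclic_invariant | exact: cyclic_ip_real].
Qed.

Lemma admissible_add_orthogonal u (W Z : set V) : admissible u W ->
  real_subspace Z -> invariant Z -> ip_real Z -> (forall w z, W w -> Z z -> ip w z = 0) ->
  admissible u (fun x => exists w z, [/\ W w, Z z & x = w + z]).
Proof.
case=> Wu [W0 WD WZ] WB Wre [Z0 ZD ZZ] ZB Zre WZ_orth.
split.
- by exists u, 0; rewrite addr0.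
- split; first by exists 0, 0; rewrite addr0.
    move=> _ _ [w1 [z1 [w1W z1Z ->]]] [w2 [z2 [w2W z2Z ->]]].
    by exists (w1 + w2), (z1 + z2); rewrite addrACA; split; [apply: WD | apply: ZD |].
  move=> r _ [w [z [wW zZ ->]]].
  by exists (r%:C *: w), (r%:C *: z); rewrite scalerDr; split; [apply: WZ | apply: ZZ |].
- move=> _ [w [z [wW zZ ->]]].
  by exists (B w), (B z); rewrite is_linearD //; split; [apply: WB | apply: ZB |].
- move=> _ _ [w1 [z1 [w1W z1Z ->]]] [w2 [z2 [w2W z2Z ->]]].
  have Z_orth w z : W w -> Z z -> ip z w = 0.
    by move=> wW zZ; rewrite (ipC Hip) WZ_orth ?rmorph0.
  rewrite !(ipDl Hip) !(ipDr Hip) (WZ_orth w1 z2) ?(WZ_orth w2 z1) ?(Z_orth w1 z2) //.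
  by rewrite (Z_orth w2 z1) // (Wre _ _ w1W w2W) (Zre _ _ z1Z z2Z).
Qed.

(* The empty set is allowed so that Zorn's lemma also covers the empty chain. *)
Definition admissible0 (u : V) (W : set V) : Prop := W = set0 \/ admissible u W.

Lemma admissible0_bigcup u (F : set (set V)) : F `<=` admissible0 u ->
  total_on F subset -> admissible0 u (\bigcup_(X in F) X).
Proof.
move=> F_adm F_tot.
have [[X0 FX0 [x0 X0x0]] | F_empty] := pselect (exists2 X, F X & X !=set0); last first.
  left; apply/seteqP; split=> // x [X FX Xx].
  by apply: F_empty; exists X => //; exists x.
have adm X x : F X -> X x -> admissible u X.
  by move=> FX Xx; case: (F_adm X FX) => // X_eq0; rewrite X_eq0 in Xx.
have common a b : (\bigcup_(X in F) X) a -> (\bigcup_(X in F) X) b ->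
    exists X, [/\ F X, X a & X b].
  move=> [X FX Xa] [Y FY Yb].
  by case: (F_tot X Y FX FY) => [XY | YX]; [exists Y; split => //; apply: XY |
    exists X; split => //; apply: YX].
have [X0u [X00 _ _] _ _] := adm X0 x0 FX0 X0x0.
right; split; first by exists X0.
- split; first by exists X0.
    move=> a b /common H /H [X [FX Xa Xb]].
    by exists X => //; have [_ [_ XD _] _ _] := adm X a FX Xa; apply: XD.
  move=> r a [X FX Xa].
  by exists X => //; have [_ [_ _ XZ] _ _] := adm X a FX Xa; apply: XZ.
- move=> a [X FX Xa].
  by exists X => //; have [_ _ XB _] := adm X a FX Xa; apply: XB.
- move=> a b /common H /H [X [FX Xa Xb]].
  by have [_ _ _ Xre] := adm X a FX Xa; apply: Xre.
Qed.

Lemma exists_maximal_admissible u :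
  exists W, admissible u W /\ forall W', admissible u W' -> W `<=` W' -> W' `<=` W.
Proof.
have [W [[W0 | W_adm] W_max]] := Zorn_bigcup (@admissible0_bigcup u).
  exfalso; apply: (W_max (cyclic u)); last by right; apply: admissible_cyclic.
  by rewrite W0; split => // /(_ u (@cyclic_self u)).
exists W; split => // W' W'_adm WW' x W'x.
apply: contrapT => Wx; apply: (W_max W'); last by right.
by split => // /(_ x W'x).
Qed.

End AdmissibleSubspaces.

Definition complexify (R : realType) (V : lmodType R[i]) (W : set V) : set V :=
  fun x => exists a b, [/\ W a, W b & x = a + 'i%C *: b].

Definition antiunitary_involution (R : realType) (V : lmodType R[i]) (ip : V -> V -> R[i])
    (J : V -> V) : Prop :=
  [/\ forall x y, J (x + y) = J x + J y, forall (c : R[i]) x, J (c *: x) = c^* *: J x,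
      forall x y, ip (J x) (J y) = (ip x y)^* & involutive J].

Section Complexification.
Variable R : realType.
Variable V : lmodType R[i].
Variable ip : V -> V -> R[i].
Hypothesis Hip : inner_product ip.
Variable W : set V.
Hypothesis W_sub : real_subspace W.
Hypothesis W_real : ip_real ip W.
Local Notation sqn := (sqn ip).

Lemma ip_real_Im a b : W a -> W b -> complex.Im (ip a b) = 0.
Proof. by move=> Wa Wb; apply/conjC_fixed_Im; rewrite -(ipC Hip) W_real. Qed.

Lemma sqn_add_i a b : W a -> W b -> sqn (a + 'i%C *: b) = sqn a + sqn b.
Proof.
move=> Wa Wb; rewrite (sqnD Hip) (sqnZ Hip) (ipZr Hip) conjCi.
have := ip_real_Im Wa Wb; case: (ip a b) => p q /= ->; ring.
Qed.

Lemma complexify_unique a b a' b' : W a -> W b -> W a' -> W b' ->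
  a + 'i%C *: b = a' + 'i%C *: b' -> a = a' /\ b = b'.
Proof.
move=> Wa Wb Wa' Wb' eq_ab.
have := sqn_add_i (real_subspaceB W_sub Wa Wa') (real_subspaceB W_sub Wb Wb').
rewrite scalerBr addrACA eq_ab -opprD subrr (sqn0 Hip).
have := sqn_ge0 Hip (a - a'); have := sqn_ge0 Hip (b - b') => ? ? ?.
by split; apply/subr0_eq/(sqn_eq0 Hip); lra.
Qed.

Lemma complexify_real_subspace : real_subspace (complexify W).
Proof.
have [W0 WD WZ] := W_sub.
split; first by exists 0, 0; rewrite scaler0 addr0.
  move=> _ _ [a [b [Wa Wb ->]]] [c [d [Wc Wd ->]]]; exists (a + c), (b + d).
  by rewrite scalerDr addrACA; split=> //; apply: WD.
move=> r _ [a [b [Wa Wb ->]]]; exists (r%:C *: a), (r%:C *: b).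
by rewrite scalerDr !scalerA mulrC; split=> //; apply: WZ.
Qed.

Variables re im : V -> V.
Hypothesis reimE : forall x, [/\ W (re x), W (im x) & x = re x + 'i%C *: im x].

Definition realform_conj (x : V) : V := re x - 'i%C *: im x.

Lemma realform_conjE a b : W a -> W b -> realform_conj (a + 'i%C *: b) = a - 'i%C *: b.
Proof.
move=> Wa Wb; rewrite /realform_conj.
by have [Wre Wim /(complexify_unique Wa Wb Wre Wim)[<- <-]] := reimE (a + 'i%C *: b).
Qed.

Lemma realform_conjD x y : realform_conj (x + y) = realform_conj x + realform_conj y.
Proof.
have [W0 WD _] := W_sub; have [Wx Wx' ->] := reimE x; have [Wy Wy' ->] := reimE y.
rewrite addrACA -scalerDr !realform_conjE //; try by apply: WD.
by rewrite scalerDr opprD addrACA.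
Qed.

Lemma realform_conjZr (r : R) x : realform_conj (r%:C *: x) = r%:C *: realform_conj x.
Proof.
have [_ _ WZ] := W_sub; have [Wa Wb xE] := reimE x.
rewrite {1}xE scalerDr scalerA mulrC -scalerA realform_conjE; try by apply: WZ.
by rewrite scalerBr scalerA mulrC -scalerA.
Qed.

Lemma realform_conj_i x : realform_conj ('i%C *: x) = - 'i%C *: realform_conj x.
Proof.
have [Wa Wb xE] := reimE x.
have -> : 'i%C *: x = - im x + 'i%C *: re x.
  by rewrite {1}xE scalerDr scalerA -expr2 sqr_i scaleN1r addrC.
rewrite realform_conjE //; last exact: real_subspaceN.
by rewrite /realform_conj scalerBr scalerA mulNr -expr2 sqr_i opprK scale1r scaleNr addrC.
Qed.

Lemma realform_conjZ c x : realform_conj (c *: x) = c^* *: realform_conj x.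
Proof.
rewrite {1}[c]complexE scalerDl realform_conjD realform_conjZr -scalerA.
by rewrite realform_conj_i realform_conjZr conjC_complexE scalerBl scalerA mulNr scaleNr.
Qed.

Lemma realform_conjK : involutive realform_conj.
Proof.
move=> x; have [Wx Wx' xE] := reimE x.
rewrite {2}/realform_conj -scalerN realform_conjE //; last exact: real_subspaceN.
by rewrite scalerN opprK -xE.
Qed.

Lemma realform_conj_ip x y : ip (realform_conj x) (realform_conj y) = (ip x y)^*.
Proof.
have [Wa Wb ->] := reimE x; have [Wc Wd ->] := reimE y.
rewrite !realform_conjE //.
move: (re x) (im x) (re y) (im y) Wa Wb Wc Wd => a b c d Wa Wb Wc Wd.
have real v w : W v -> W w -> (ip v w)^* = ip v w.
  by move=> Wv Ww; rewrite -(ipC Hip) W_real.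
rewrite !(ipBl Hip) !(ipBr Hip) !(ipDl Hip) !(ipDr Hip) !(ipZl Hip) !(ipZr Hip).
rewrite !(rmorphD, rmorphB, rmorphM) /= ?conjCK conjCi !real //; ring.
Qed.

Lemma realform_conj_antiunitary : antiunitary_involution ip realform_conj.
Proof.
split; [exact: realform_conjD | exact: realform_conjZ | exact: realform_conj_ip |
  exact: realform_conjK].
Qed.

Lemma realform_conj_fixed a : W a -> realform_conj a = a.
Proof.
move=> Wa; have [W0 _ _] := W_sub.
by rewrite -[a]addr0 -(scaler0 _ 'i%C) realform_conjE // scaler0 !subr0 addr0.
Qed.

Lemma realform_conj_commute (F : V -> V) : is_linear F -> (forall a, W a -> W (F a)) ->
  forall x, realform_conj (F x) = F (realform_conj x).
Proof.
move=> Flin WF x; have [Wa Wb xE] := reimE x.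
rewrite {1}xE (is_linearD Flin) (is_linearZ Flin) realform_conjE; try by apply: WF.
by rewrite /realform_conj (is_linearB Flin) (is_linearZ Flin).
Qed.

End Complexification.

Section MaximalAdmissible.
Variable R : realType.
Variable V : lmodType R[i].
Variable ip : V -> V -> R[i].
Hypothesis Hip : inner_product ip.
Hypothesis Hcomplete : complete ip.
Variable B : V -> V.
Hypothesis Blin : is_linear B.
Variable K : R.
Hypothesis BK : forall x, sqn ip (B x) <= K * sqn ip x.
Hypothesis Bsa : self_adjoint ip B.
Variable u : V.
Variable W : set V.
Hypothesis W_adm : admissible ip B u W.
Hypothesis W_max : forall W', admissible ip B u W' -> W `<=` W' -> W' `<=` W.
Local Notation sqn := (sqn ip).
Local Notation converges := (converges ip).

Let W_sub : real_subspace W. Proof. by case: W_adm. Qed.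
Let W_real : ip_real ip W. Proof. by case: W_adm. Qed.

Lemma maximal_orthogonal v : (forall w, W w -> ip w v = 0) -> v = 0.
Proof.
move=> v_orth; pose O : set V := fun y => forall w, W w -> ip w y = 0.
have O_sub : real_subspace O.
  split=> [w _ | a b Oa Ob w Ww | r a Oa w Ww]; first exact: ip0r.
    by rewrite (ipDr Hip) Oa ?Ob ?addr0.
  by rewrite (ipZr Hip) Oa ?mulr0.
have O_inv : invariant B O.
  by move=> a Oa w Ww; rewrite -Bsa Oa //; case: W_adm => _ _ + _; apply.
have v_cyc_orth w z : W w -> cyclic B v z -> ip w z = 0.
  by move=> Ww /(_ O O_sub O_inv v_orth); apply.
have W_le : W `<=` (fun x => exists w z, [/\ W w, cyclic B v z & x = w + z]).
  by move=> x Wx; exists x, 0; rewrite addr0; case: (cyclic_real_subspace B v).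
have := admissible_add_orthogonal Hip Blin W_adm (cyclic_real_subspace B v)
  (cyclic_invariant (B := B) (v := v)) (cyclic_ip_real Hip Bsa (v := v)) v_cyc_orth.
move=> /W_max /(_ W_le) Wv_sub.
have /Wv_sub Wv : exists w z, [/\ W w, cyclic B v z & v = w + z].
  by exists 0, v; rewrite add0r; split; [case: W_sub | apply: cyclic_self |].
by apply: (sqn_eq0 Hip); rewrite /sqn v_orth.
Qed.

Lemma maximal_seq_closed : seq_closed ip W.
Proof.
have [W0 WD WZ] := W_sub; have [Wu _ WB _] := W_adm.
pose Wc : set V := fun x => exists f, (forall n, W (f n)) /\ converges f x.
have Wc_adm : admissible ip B u Wc.
  split.
  - by exists (fun=> u); split=> //; apply: converges_cst.
  - split.
    + by exists (fun=> 0); split=> //; apply: converges_cst.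
    + move=> a b [f [Wf fa]] [g [Wg gb]].
      by exists (fun n => f n + g n); split; [move=> n; apply: WD | apply: convergesD].
    + move=> r a [f [Wf fa]].
      by exists (fun n => r%:C *: f n); split; [move=> n; apply: WZ | apply: convergesZ].
  - move=> a [f [Wf fa]]; exists (B \o f); split; first by move=> n; apply: WB.
    exact: converges_lipschitz (is_linearB Blin) BK fa.
  - move=> a b [f [Wf fa]] [g [Wg gb]]; rewrite [RHS](ipC Hip); apply/esym/conjC_fixed_Im.
    have Im_a n : complex.Im (ip a (g n)) = 0.
      by apply: (converges_Im_ip0 Hip fa) => m; apply: (ip_real_Im Hip W_real).
    have Im_b : complex.Im (ip b a) = 0.
      apply: (converges_Im_ip0 Hip gb) => n.
      by rewrite (ipC Hip) Im_conjC Im_a oppr0.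
    by rewrite (ipC Hip) Im_conjC Im_b oppr0.
move=> f x Wf fx; apply: (W_max Wc_adm); last by exists f.
by move=> y Wy; exists (fun=> y); split=> //; apply: converges_cst.
Qed.

Lemma complexify_seq_closed : seq_closed ip (complexify W).
Proof.
move=> f x Wf fx.
have [fa /choice[fb fab]] := choice Wf.
have Wfa n : W (fa n) by case: (fab n).
have Wfb n : W (fb n) by case: (fab n).
have f_eq n : f n = fa n + 'i%C *: fb n by case: (fab n).
have sqn_f m n : sqn (f m - f n) = sqn (fa m - fa n) + sqn (fb m - fb n).
  rewrite !f_eq -(sqn_add_i Hip W_real); try exact: real_subspaceB W_sub _ _.
  by rewrite scalerBr opprD addrACA.
have f_cauchy := converges_cauchy Hip fx.
have [a fa_a] : exists a, converges fa a.
  apply: (cauchy_converges Hip Hcomplete) => e /f_cauchy[N fN].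
  by exists N => m n mN nN; have := fN m n mN nN; rewrite sqn_f;
    have := sqn_ge0 Hip (fb m - fb n); lra.
have [b fb_b] : exists b, converges fb b.
  apply: (cauchy_converges Hip Hcomplete) => e /f_cauchy[N fN].
  by exists N => m n mN nN; have := fN m n mN nN; rewrite sqn_f;
    have := sqn_ge0 Hip (fa m - fa n); lra.
exists a, b; split; try exact: maximal_seq_closed fa_a.
  exact: maximal_seq_closed fb_b.
apply: (converges_unique Hip fx); rewrite (funext f_eq).
exact: convergesD fa_a (convergesZ Hip _ fb_b).
Qed.

Lemma complexify_maximal x : complexify W x.
Proof.
have [p Wp p_orth] := projection Hip (complexify_real_subspace W_sub)
  complexify_seq_closed Hcomplete x.
have [W0 _ _] := W_sub.
(* [x - p] is orthogonal to [W] because both [Re <x - p, w>] and [Re <x - p, i w>] vanish *)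
suff -> : x = p by [].
apply/subr0_eq/maximal_orthogonal => w Ww; rewrite (ipC Hip); apply/eqP.
rewrite conjC_eq0; apply/eqP.
have := p_orth w (ltac:(by exists w, 0; rewrite scaler0 addr0)).
have := p_orth ('i%C *: w) (ltac:(by exists 0, w; rewrite add0r)).
rewrite (ipZr Hip) conjCi; case: (ip (x - p) w) => c d /= h1 h2.
by apply/eqP; rewrite eq_complex /=; apply/andP; split; apply/eqP; lra.
Qed.

End MaximalAdmissible.

Section Conjugations.
Variable R : realType.
Variable V : lmodType R[i].
Variable ip : V -> V -> R[i].
Hypothesis Hip : inner_product ip.

Lemma antiunitary_conjugation J : antiunitary_involution ip J -> conjugation ip J.
Proof.
case=> JD JZ Jip JK; split=> // x.
by rewrite /hnorm Jip (ipxx Hip) conjC_realC.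
Qed.

Lemma exists_commuting_conjugation B u : complete ip -> bounded_op ip B -> self_adjoint ip B ->
  exists J, [/\ antiunitary_involution ip J, forall x, J (B x) = B (J x) & J u = u].
Proof.
move=> Hcomplete [Blin B_bd] Bsa.
have [K BK] := bounded_op_sqn Hip (conj Blin B_bd).
have [W [W_adm W_max]] := exists_maximal_admissible Hip Bsa u.
have [Wu W_sub W_inv W_real] := W_adm.
have [re /choice[im reimE]] := choice
  (complexify_maximal Hip Hcomplete Blin BK Bsa W_adm W_max).
exists (realform_conj re im); split.
- exact: (realform_conj_antiunitary Hip W_sub W_real reimE).
- exact: (realform_conj_commute Hip W_sub W_real reimE Blin W_inv).
- exact: (realform_conj_fixed Hip W_sub W_real reimE Wu).
Qed.

Lemma rank_one_conj_fixed A u J : self_adjoint ip A ->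
  (forall x, exists c, A x = c *: u) -> u != 0 ->
  antiunitary_involution ip J -> J u = u -> forall x, J (A (J x)) = A x.
Proof.
move=> Asa /choice[c Ac] u_neq0 [JD JZ Jip JK] Ju x.
have uu_neq0 : ip u u != 0.
  apply/eqP => uu0; move/eqP: u_neq0; apply; apply: (sqn_eq0 Hip).
  by rewrite /sqn uu0.
have c_ip y : c y * ip u u = (c u)^* * ip y u.
  by rewrite -(ipZl Hip) -Ac Asa Ac (ipZr Hip).
have cu_real : (c u)^* = c u by apply: (mulIf uu_neq0); rewrite -c_ip.
have uu_real : (ip u u)^* = ip u u by rewrite (ipxx Hip) conjC_realC.
have Jx_u : ip (J x) u = (ip x u)^* by rewrite -{1}Ju Jip.
rewrite !Ac JZ Ju; congr (_ *: _); apply: (mulIf uu_neq0).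
by rewrite -{1}uu_real -rmorphM /= c_ip rmorphM /= conjCK Jx_u conjCK -cu_real -c_ip.
Qed.

Lemma complex_symmetric_of_conj_fixed T A B J :
  self_adjoint ip A -> self_adjoint ip B -> (forall x, T x = A x + 'i%C *: B x) ->
  antiunitary_involution ip J -> (forall x, J (A (J x)) = A x) ->
  (forall x, J (B (J x)) = B x) -> complex_symmetric ip T.
Proof.
move=> Asa Bsa T_eq J_anti JA JB; have [JD JZ _ _] := J_anti.
exists J; split; first exact: antiunitary_conjugation.
exists (fun x => A x - 'i%C *: B x); split.
  move=> x y; rewrite T_eq (ipDl Hip) (ipZl Hip) (ipBr Hip) (ipZr Hip) conjCi.
  by rewrite Asa Bsa mulNr opprK.
by move=> x; rewrite -scaleNr JD JZ JA JB rmorphN /= conjCi opprK T_eq.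
Qed.

Lemma exists_conj_fixing P Q : complete ip ->
  self_adjoint ip P -> rank_one P -> bounded_op ip Q -> self_adjoint ip Q ->
  exists J, [/\ antiunitary_involution ip J, forall x, J (P (J x)) = P x
    & forall x, J (Q (J x)) = Q x].
Proof.
move=> Hcomplete Psa [u [u_neq0 [Pu _]]] Qbd Qsa.
have [J [J_anti JQ Ju]] := exists_commuting_conjugation u Hcomplete Qbd Qsa.
exists J; split=> //; first exact: rank_one_conj_fixed Pu u_neq0 J_anti Ju.
by move=> x; rewrite JQ; case: J_anti => _ _ _ ->.
Qed.

End Conjugations.

Theorem corollary4p4 (R : realType) (V : lmodType R[i]) (ip : V -> V -> R[i])
  (T A B : V -> V) :
  separable_hilbert ip ->
  bounded_op ip T ->
  bounded_op ip A -> self_adjoint ip A ->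
  bounded_op ip B -> self_adjoint ip B ->
  (forall x : V, T x = A x + 'i%C *: B x) ->
  rank_one A \/ rank_one B ->
  complex_symmetric ip T.
Proof.
move=> [Hip Hcomplete _] _ Abd Asa Bbd Bsa T_eq rank1.
have [J [J_anti JA JB]] : exists J, [/\ antiunitary_involution ip J,
    forall x, J (A (J x)) = A x & forall x, J (B (J x)) = B x].
  case: rank1 => [A1 | B1]; first exact: exists_conj_fixing.
  by have [J [? ? ?]] := exists_conj_fixing Hip Hcomplete Bsa B1 Abd Asa; exists J.
exact: (complex_symmetric_of_conj_fixed Hip Asa Bsa T_eq J_anti JA JB).
Qed.
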